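(* Let $n\geq5$. For every $1\leq i\leq n-1$ and every integer $0\leq s < i/2$, we have \[w_{i,s}\leq \frac{2}{(i+1)|L_{i+1}|}.\]
   Context: In $\{0,1,2\}^n$ (ordered coordinatewise), $L_i$ is the set of vectors with coordinate sum $i$, $L_i^s$ the elements of $L_i$ with exactly $s$ coordinates equal to $2$, $L_i^{\geq s}=\bigcup_{r\geq s}L_i^r$. For such $i,s$: \[w_{i,s}=\frac{|L_i||L_{i+1}^{\geq s+1}| - |L_{i+1}||L_i^{\geq s+1}|}{|L_i^s||L_i||L_{i+1}|(i-2s)}.\] *)

From HB Require Import structures.
From mathcomp Require Import all_boot all_order all_algebra.
Set Implicit Arguments. Unset Strict Implicit. Unset Printing Implicit Defensive.
Import Order.TTheory GRing.Theory Num.Theory.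

Definition vec (n : nat) := {ffun 'I_n -> 'I_3}.

Definition csum n (x : vec n) : nat := \sum_(j < n) (x j : nat).

Definition ntwos n (x : vec n) : nat := #|[set j : 'I_n | (x j : nat) == 2]|.

Definition Lev n i : {set vec n} := [set x : vec n | csum x == i].
Definition LevS n i s : {set vec n} := [set x : vec n | (csum x == i) && (ntwos x == s)].
Definition LevGe n i s : {set vec n} := [set x : vec n | (csum x == i) && (s <= ntwos x)].

Local Open Scope ring_scope.

Definition w n i s : rat :=
  ((#|Lev n i|%:R * #|LevGe n i.+1 s.+1|%:R - #|Lev n i.+1|%:R * #|LevGe n i s.+1|%:R)
   / (#|LevS n i s|%:R * #|Lev n i|%:R * #|Lev n i.+1|%:R * (i%:R - (2 * s)%:R))).

From HB Require Import structures.
From mathcomp Require Import all_boot all_order all_algebra.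
From mathcomp Require Import zify ring lra.
Import Order.TTheory GRing.Theory Num.Theory.
Set Implicit Arguments. Unset Strict Implicit. Unset Printing Implicit Defensive.

(* Double counting the pairs (y, j) with y in L_(i+1), weighted by y_j, expresses
   (i+1) * sum_(y in L_(i+1)) g(#twos y) as a sum over x in L_i of
   z(x) g(#twos x) + 2 o(x) g(#twos x + 1), where z, o count the zeros and ones
   of x. Taking g = 1 and g = [s < _] writes (i+1)|L_(i+1)| and
   (i+1)|L_(i+1)^(>=s+1)| as sums over L_i of the weight u = z + 2o, plus the
   correction 2(i-2s)|L_i^s| in the second case. On L_i we have
   u = n + i - 3 #twos, so u and [s < #twos] are oppositely ordered, and
   Chebyshev's sum inequality bounds the numerator of w_(i,s) by
   2(i-2s)|L_i^s||L_i|/(i+1). *)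

Local Open Scope ring_scope.

Lemma card_set_sum (T : finType) (P : pred T) : #|[set x | P x]| = (\sum_x P x)%N.
Proof. by rewrite -sum1dep_card big_mkcond. Qed.

Lemma chebyshev_sum (R : numDomainType) (I : finType) (A : {pred I}) (f g : I -> R) :
  {in A &, forall a b, (f a - f b) * (g a - g b) <= 0} ->
  #|A|%:R * \sum_(a in A) f a * g a <= (\sum_(a in A) f a) * \sum_(a in A) g a.
Proof.
move=> opposite.
set D := \sum_(a in A) \sum_(b in A) (f a - f b) * g a.
have D_eq : D = #|A|%:R * \sum_(a in A) f a * g a
                - (\sum_(a in A) f a) * \sum_(a in A) g a.
  rewrite !mulr_sumr -sumrB; apply: eq_bigr => a _.
  by rewrite -mulr_suml sumrB sumr_const mulrBl !mulrnAl mul1r.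
have D_sym : D + D = \sum_(a in A) \sum_(b in A) (f a - f b) * (g a - g b).
  rewrite {2}/D exchange_big -big_split; apply: eq_bigr => a _.
  by rewrite -big_split; apply: eq_bigr => b _ /=; ring.
have : 2%:R * D <= 0.
  rewrite mulr_natl mulr2n D_sym.
  by apply: sumr_le0 => a Aa; apply: sumr_le0 => b Ab; exact: opposite.
by rewrite pmulr_rle0 // D_eq subr_le0.
Qed.

Section Levels.
Variable n : nat.
Implicit Types (x y : vec n) (j : 'I_n).

Definition nzeros x : nat := #|[set j | (x j : nat) == 0%N]|.
Definition nones x : nat := #|[set j | (x j : nat) == 1%N]|.

Lemma nzeros_nones_ntwos x : (nzeros x + nones x + ntwos x = n)%N.
Proof.
rewrite /nzeros /nones /ntwos !card_set_sum -!big_split /= -[RHS]card_ord -sum1_card.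
by apply: eq_bigr => j _; case: (x j) => [[|[|[|?]]] ?].
Qed.

Lemma csum_ones_twos x : csum x = (nones x + 2 * ntwos x)%N.
Proof.
rewrite /csum /nones /ntwos !card_set_sum big_distrr -big_split /=.
by apply: eq_bigr => j _; case: (x j) => [[|[|[|?]]] ?].
Qed.

Definition bump j x : vec n := [ffun k => if k == j then x k + 1 else x k].

Lemma bump_inj j : injective (bump j).
Proof.
move=> x y /ffunP eq_xy; apply/ffunP => k; move: (eq_xy k); rewrite !ffunE.
by case: eqP => // _; apply: addIr.
Qed.

Lemma ord3_add1 (a : 'I_3) :
  ((a + 1)%R : nat) = if (a : nat) == 2%N then 0%N else (a : nat).+1.
Proof. by case: a => [[|[|[|?]]] ?]. Qed.

Lemma sum_bump (h : 'I_3 -> nat) j x :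
  (\sum_k h (bump j x k) + h (x j) = \sum_k h (x k) + h (x j + 1)%R)%N.
Proof.
rewrite (bigD1 j) //= [in RHS](bigD1 j) //= ffunE eqxx.
under eq_bigr => k /negbTE k_neq_j do rewrite ffunE k_neq_j.
lia.
Qed.

Lemma bump_weight (R : comNzRingType) i (g : nat -> R) j x :
  (csum (bump j x) == i.+1)%:R * (bump j x j : nat)%:R * g (ntwos (bump j x))
  = (csum x == i)%:R * (((x j : nat) == 0%N)%:R * g (ntwos x)
                        + 2 * ((x j : nat) == 1%N)%:R * g (ntwos x).+1).
Proof.
have csum_bump := sum_bump (fun a => a : nat) j x.
have ntwos_bump := sum_bump (fun a => (a : nat) == 2%N) j x.
rewrite /csum /ntwos !card_set_sum in csum_bump ntwos_bump *.
rewrite ffunE eqxx !ord3_add1 in csum_bump ntwos_bump *; move: csum_bump ntwos_bump.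
move: (\sum_k (bump j x k : nat))%N (\sum_k (x k : nat))%N => c' c.
move: (\sum_k ((bump j x k : nat) == 2%N) : nat)%N (\sum_k ((x k : nat) == 2%N) : nat)%N => t' t.
case: (x j) => [[|[|[|?]]] ?] //= => [Ec Et|Ec Et|_ _].
- have -> : c' = c.+1 by lia.
  have -> : t' = t by lia.
  by rewrite eqSS; ring.
- have -> : c' = c.+1 by lia.
  have -> : t' = t.+1 by lia.
  by rewrite eqSS; ring.
- ring.
Qed.

(* Reindex the pairs (y, j) by y = bump j x; the terms with x_j = 2 vanish
   because bump j x then has coordinate 0 at j. *)
Lemma sum_Lev_succ (R : comNzRingType) i (g : nat -> R) :
  i.+1%:R * \sum_(y in Lev n i.+1) g (ntwos y)
  = \sum_(x in Lev n i)
      ((nzeros x)%:R * g (ntwos x) + 2 * (nones x)%:R * g (ntwos x).+1).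
Proof.
transitivity (\sum_(j < n) \sum_y
                (csum y == i.+1)%:R * (y j : nat)%:R * g (ntwos y)).
  rewrite exchange_big big_mkcond big_distrr /=; apply: eq_bigr => y _.
  rewrite inE; case: eqP => [<-|_]; last by rewrite mulr0 big1 // => j _; rewrite !mul0r.
  by rewrite /csum natr_sum mulr_suml; apply: eq_bigr => j _; rewrite mul1r.
transitivity (\sum_(j < n) \sum_x (csum x == i)%:R *
   (((x j : nat) == 0%N)%:R * g (ntwos x) + 2 * ((x j : nat) == 1%N)%:R * g (ntwos x).+1)).
  apply: eq_bigr => j _; rewrite (reindex_inj (@bump_inj j)).
  by apply: eq_bigr => x _; rewrite bump_weight.
rewrite exchange_big [RHS]big_mkcond; apply: eq_bigr => x _.
rewrite -big_distrr /= inE; case: (csum x =P i) => _; last by rewrite mul0r.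
rewrite mul1r big_split -!mulr_suml -!mulr_sumr.
by rewrite /nzeros /nones !card_set_sum !natr_sum.
Qed.

Lemma card_Lev_sub i (P : pred (vec n)) :
  #|[set x | (csum x == i) && P x]| = (\sum_(x in Lev n i) P x)%N.
Proof.
rewrite card_set_sum [RHS]big_mkcond; apply: eq_bigr => x _.
by rewrite inE; case: (csum x == i).
Qed.

Definition up_weight x : nat := nzeros x + 2 * nones x.

Lemma up_weight_Lev i x : x \in Lev n i -> (up_weight x + 3 * ntwos x = n + i)%N.
Proof.
rewrite inE csum_ones_twos /up_weight => /eqP <-.
by have := nzeros_nones_ntwos x; lia.
Qed.

Lemma card_Lev_succ (R : comNzRingType) i :
  i.+1%:R * #|Lev n i.+1|%:R = \sum_(x in Lev n i) (up_weight x)%:R :> R.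
Proof.
have := sum_Lev_succ i (fun _ => 1 : R); rewrite sumr_const -mulr_natr mul1r => ->.
by apply: eq_bigr => x _; rewrite /up_weight natrD natrM !mulr1.
Qed.

Lemma card_LevGe_succ (R : comNzRingType) i s :
  i.+1%:R * #|LevGe n i.+1 s.+1|%:R
  = \sum_(x in Lev n i) (s < ntwos x)%:R * (up_weight x)%:R
    + 2 * (i - 2 * s)%:R * #|LevS n i s|%:R :> R.
Proof.
have := sum_Lev_succ i (fun t => (s < t)%:R : R).
rewrite /LevGe /LevS !card_Lev_sub !natr_sum => ->.
rewrite big_distrr -big_split /=; apply: eq_bigr => x x_Lev.
have csum_x : (nones x + 2 * ntwos x = i)%N.
  by move: x_Lev; rewrite inE csum_ones_twos => /eqP.
rewrite /up_weight natrD natrM ltnS.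
case: (ltngtP s (ntwos x)) => [_|_|t_eq] /=; try ring.
by rewrite -t_eq in csum_x; rewrite -csum_x addnK; ring.
Qed.

Lemma ntwos_up_weight_opposite (R : realDomainType) i s :
  {in Lev n i &, forall x y,
    ((s < ntwos x)%:R - (s < ntwos y)%:R) * ((up_weight x)%:R - (up_weight y)%:R)
    <= 0 :> R}.
Proof.
move=> x y /up_weight_Lev wx /up_weight_Lev wy.
case: (leqP (ntwos x) (ntwos y)) => [le_xy|/ltnW le_yx].
- by apply: mulr_le0_ge0; rewrite ?subr_le0 ?subr_ge0 ler_nat; lia.
- by apply: mulr_ge0_le0; rewrite ?subr_le0 ?subr_ge0 ler_nat; lia.
Qed.

Lemma w_numerator_le (R : realDomainType) i s :
  i.+1%:R * (#|Lev n i|%:R * #|LevGe n i.+1 s.+1|%:R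
             - #|Lev n i.+1|%:R * #|LevGe n i s.+1|%:R)
  <= 2 * (i - 2 * s)%:R * #|LevS n i s|%:R * #|Lev n i|%:R :> R.
Proof.
have cheb := chebyshev_sum (@ntwos_up_weight_opposite R i s).
rewrite mulrBr mulrCA card_LevGe_succ mulrA card_Lev_succ.
rewrite [#|LevGe n i s.+1|]card_Lev_sub natr_sum.
lra.
Qed.

End Levels.

Theorem mainTheorem11 (n i s : nat) :
  (5 <= n)%N -> (1 <= i)%N -> (i <= n - 1)%N -> (2 * s < i)%N ->
  w n i s <= 2 / ((i.+1)%:R * (#|Lev n i.+1|)%:R).
Proof.
move=> _ _ _ two_s_lt_i.
have := @w_numerator_le n rat i s; rewrite (natrB _ (ltnW two_s_lt_i)) /w.
have d_gt0 : 0 < i%:R - (2 * s)%:R :> rat by rewrite subr_gt0 ltr_nat.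
set N := (_ - _ * _); set d := (_ - _) in d_gt0 *.
set As := #|LevS n i s|%:R; set A := #|Lev n i|%:R; set B := #|Lev n i.+1|%:R.
move=> num_le.
have [D_eq0|D_neq0] := eqVneq (As * A * B * d) 0.
  by rewrite D_eq0 invr0 mulr0 divr_ge0 ?mulr_ge0 ?ler0n.
have D_gt0 : 0 < As * A * B * d by rewrite lt_def D_neq0 !mulr_ge0 ?ler0n ?ltW.
have B_neq0 : B != 0 by apply: contra D_neq0 => /eqP ->; rewrite mulr0 mul0r.
rewrite ler_pdivrMr //.
have -> : 2 / (i.+1%:R * B) * (As * A * B * d) = 2 * d * As * A / i.+1%:R.
  by field; rewrite addrC natr1 pnatr_eq0 B_neq0.
by rewrite ler_pdivlMr // mulrC.
Qed.
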